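(* Let $\Lambda,\alpha,r$ be positive integers with $\alpha\in[\Lambda-1]$ and $r\in[\Lambda-\alpha]$. Let $D_{\Lambda,r,\alpha}$ be the $\binom{\Lambda}{r}\times\binom{\Lambda}{\alpha}$ array defined below. Then $D_{\Lambda,r,\alpha}$ is a $\binom{r+\alpha}{r}$-regular $\left(\binom{\Lambda}{\alpha},\binom{\Lambda}{r},\binom{\Lambda}{\alpha+r}\right)$ MRA. Moreover, the symbol $*$ appears exactly $\binom{\Lambda}{r}-\binom{\Lambda-\alpha}{r}$ times in each column.
   Context: Notation: $[0,n)=\{0,1,\dots,n-1\}$, $[n]=\{1,\dots,n\}$. Construction (Algorithm 1): Order all subsets of $[0,\Lambda)$ of size $\alpha+r$ lexicographically and, for such a subset $T'$, let $y_{\alpha+r}(T')\in[0,\binom{\Lambda}{\alpha+r})$ be its position in this order minus 1. The array $D_{\Lambda,r,\alpha}$ has rows indexed by the $r$-subsets $T\subset[0,\Lambda)$ and columns indexed by the $\alpha$-subsets $U\subset[0,\Lambda)$, and entries $d_{T,U}=*$ if $T\cap U\neq\emptyset$, and $d_{T,U}=y_{\alpha+r}(T\cup U)$ if $T\cap U=\emptyset$. Map-Reduce Array (MRA): For positive integers $K,F,S$, an $F\times K$ array $P=[p_{f,k}]$, whose entries are either the symbol $*$ or integers from $[0,S)$, with every integer of $[0,S)$ occurring in $P$, is a $(K,F,S)$ MRA if: (C1) each integer occurs more than once in $P$; (C2) whenever two distinct entries satisfy $p_{f_1,k_1}=p_{f_2,k_2}=s$ with $s$ an integer, then $f_1\neq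 f_2$, $k_1\neq k_2$, and $p_{f_1,k_2}=p_{f_2,k_1}=*$. It is a $g$-regular MRA (for a constant $g\ge 2$) if it satisfies (C2) and every integer occurs exactly $g$ times. *)

From mathcomp Require Import all_boot.
Set Implicit Arguments. Unset Strict Implicit. Unset Printing Implicit Defensive.

(* An array entry: [None] is the symbol *, [Some s] is the integer s. *)

Definition occ (I J : finType) (P : I -> J -> option nat) (s : nat) : nat :=
  #|[set ij : I * J | P ij.1 ij.2 == Some s]|.

Definition MRA_array (I J : finType) (K F S : nat) (P : I -> J -> option nat) : Prop :=
  [/\ #|J| = K, #|I| = F,
      (forall i j s, P i j = Some s -> s < S) &
      (forall s, s < S -> exists i j, P i j = Some s)].

Definition MRA_C1 (I J : finType) (S : nat) (P : I -> J -> option nat) : Prop :=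
  forall s, s < S -> 1 < occ P s.

Definition MRA_C2 (I J : finType) (P : I -> J -> option nat) : Prop :=
  forall f1 f2 k1 k2 s, (f1, k1) <> (f2, k2) ->
    P f1 k1 = Some s -> P f2 k2 = Some s ->
    [/\ f1 <> f2, k1 <> k2, P f1 k2 = None & P f2 k1 = None].

Definition is_MRA (I J : finType) (K F S : nat) (P : I -> J -> option nat) : Prop :=
  [/\ MRA_array K F S P, MRA_C1 S P & MRA_C2 P].

Definition is_regular_MRA (I J : finType) (g K F S : nat) (P : I -> J -> option nat) : Prop :=
  [/\ 2 <= g, MRA_array K F S P, MRA_C2 P & (forall s, s < S -> occ P s = g)].

Fixpoint lex_lt (s t : seq nat) : bool :=
  match s, t with
  | [::], [::] => false
  | [::], _ :: _ => true
  | _ :: _, [::] => false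
  | x :: s', y :: t' => (x < y) || ((x == y) && lex_lt s' t')
  end.

Definition sset (L : nat) (A : {set 'I_L}) : seq nat := sort leq [seq val x | x in A].

(* y_k(T'): position of T' among the k-subsets of [0,L) in lexicographic order, minus 1. *)
Definition ylex (L k : nat) (T' : {set 'I_L}) : nat :=
  #|[set A : {set 'I_L} | (#|A| == k) && lex_lt (sset A) (sset T')]|.

Definition ksubset (L k : nat) := {A : {set 'I_L} | #|A| == k}.

Definition Darray (L r a : nat) (T : ksubset L r) (U : ksubset L a) : option nat :=
  if val T :&: val U == set0 then Some (ylex (a + r) (val T :|: val U)) else None.

From mathcomp Require Import all_boot.
Set Implicit Arguments. Unset Strict Implicit. Unset Printing Implicit Defensive.

(* Since [ylex] is injective on (a+r)-sets, [Darray T U = Some (ylex X)] holds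
   exactly when [T] and [U] split [X] into an r-part and an a-part.  Hence the
   entry [s] occurs once for each r-subset of the (a+r)-set coded by [s], two
   equal entries come from two splittings of the same set (which makes the
   cross entries intersect), and a column [U] has a non-* entry exactly in the
   rows [T] contained in the complement of [U]. *)

Lemma lex_lt_irr s : ~~ lex_lt s s.
Proof. by elim: s => //= x s IH; rewrite ltnn eqxx. Qed.

Lemma lex_lt_trans s t u : lex_lt s t -> lex_lt t u -> lex_lt s u.
Proof.
elim: s t u => [|x s IH] [|y t] [|z u] //=.
case/orP=> [lxy|/andP[/eqP-> lst]]; case/orP=> [lyz|/andP[/eqP<- ltu]].
- by rewrite (ltn_trans lxy lyz).
- by rewrite lxy.
- by rewrite lyz.
- by rewrite eqxx (IH _ _ lst ltu) orbT.
Qed.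

Lemma lex_lt_total s t : s != t -> lex_lt s t || lex_lt t s.
Proof.
elim: s t => [|x s IH] [|y t] //= neq.
case: (ltngtP x y) => //= eqxy; apply: IH.
by apply: contra neq => /eqP->; rewrite eqxy.
Qed.

Lemma mem_sset L (A : {set 'I_L}) (x : 'I_L) : (val x \in sset A) = (x \in A).
Proof. by rewrite /sset mem_sort (mem_map val_inj) mem_enum. Qed.

Lemma sset_inj L : injective (@sset L).
Proof. by move=> A B eqAB; apply/setP => x; rewrite -!mem_sset eqAB. Qed.

Lemma card_ksubset L k : #|{: ksubset L k}| = 'C(L, k).
Proof.
by rewrite card_sig -[in RHS](card_ord L) -card_draws; apply: eq_card => A; rewrite !inE.
Qed.

Section LexRank.

Variables L k : nat.
Implicit Types X Y : {set 'I_L}.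

Lemma ylex_lt_mono X Y : #|X| = k -> lex_lt (sset X) (sset Y) -> ylex k X < ylex k Y.
Proof.
move=> cardX ltXY; apply: proper_card; apply/properP; split.
  by apply/subsetP => A; rewrite !inE => /andP[-> /lex_lt_trans]; apply.
by exists X; rewrite !inE ?cardX ?eqxx ?ltXY ?(negbTE (lex_lt_irr _)) ?andbF.
Qed.

Lemma ylex_lt_bin X : #|X| = k -> ylex k X < 'C(L, k).
Proof.
move=> cardX; rewrite -[L in 'C(L, _)]card_ord -card_draws.
apply: proper_card; apply/properP; split.
  by apply/subsetP => A; rewrite !inE => /andP[].
by exists X; rewrite !inE ?cardX ?(negbTE (lex_lt_irr _)) ?andbF.
Qed.

Lemma ylex_inj X Y : #|X| = k -> #|Y| = k -> ylex k X = ylex k Y -> X = Y.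
Proof.
move=> cardX cardY eqXY; apply: sset_inj; apply/eqP; apply: contraT.
case/lex_lt_total/orP=> [/(ylex_lt_mono cardX)|/(ylex_lt_mono cardY)];
  by rewrite eqXY ltnn.
Qed.

Lemma ylex_onto s : s < 'C(L, k) -> exists2 X : {set 'I_L}, #|X| = k & ylex k X = s.
Proof.
move=> ltsC.
pose rank (A : ksubset L k) : 'I_('C(L, k)) := Ordinal (ylex_lt_bin (eqP (valP A))).
have rank_inj : injective rank.
  move=> A B /(congr1 val) /= eqAB; apply: val_inj.
  exact: ylex_inj (eqP (valP A)) (eqP (valP B)) eqAB.
have := inj_card_onto rank_inj _ (Ordinal ltsC).
rewrite card_ksubset card_ord leqnn => /(_ isT) /codomP[A /(congr1 val) /= ->].
by exists (val A); first exact: eqP (valP A).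
Qed.

End LexRank.

Lemma setDUKl (T : finType) (A B : {set T}) : [disjoint A & B] -> (A :|: B) :\: A = B.
Proof. by move=> dAB; rewrite setDUl setDv set0U; apply/setDidPl; rewrite disjoint_sym. Qed.

Lemma setDUKr (T : finType) (A B : {set T}) : [disjoint A & B] -> (A :|: B) :\: B = A.
Proof. by rewrite disjoint_sym setUC; apply: setDUKl. Qed.

Lemma setUDKs (T : finType) (A B : {set T}) : A \subset B -> A :|: (B :\: A) = B.
Proof. by move=> sAB; rewrite setDE setUIr setUCr setIT; apply/setUidPr. Qed.

Lemma bin_gt1 n k : 0 < k < n -> 1 < 'C(n, k).
Proof.
case: n k => [|n] [|k] //= /ltnSE ltkn; rewrite binS.
by rewrite -[2]/(1 + 1) leq_add // bin_gt0 // ltnW.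
Qed.

Section DarrayTheory.

Variables L r a : nat.
Local Notation row := (ksubset L r).
Local Notation col := (ksubset L a).
Local Notation D := (@Darray L r a).

Let card_row (T : row) : #|val T| = r. Proof. exact: eqP (valP T). Qed.
Let card_col (U : col) : #|val U| = a. Proof. exact: eqP (valP U). Qed.

Lemma card_disjointU (T : row) (U : col) :
  [disjoint val T & val U] -> #|val T :|: val U| = a + r.
Proof.
by move=> dTU; rewrite cardsU (disjoint_setI0 dTU) cards0 subn0 card_row card_col addnC.
Qed.

Lemma Darray_eq_None (T : row) (U : col) : (D T U == None) = ~~ [disjoint val T & val U].
Proof. by rewrite /Darray setI_eq0; case: ifP. Qed.

Lemma Darray_SomeP (T : row) (U : col) s :
  D T U = Some s -> [disjoint val T & val U] /\ s = ylex (a + r) (val T :|: val U).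
Proof. by rewrite /Darray setI_eq0; case: ifP => // dTU [<-]. Qed.

Lemma Darray_ylex (T : row) (U : col) (X : {set 'I_L}) : #|X| = a + r ->
  (D T U == Some (ylex (a + r) X)) = [disjoint val T & val U] && (val T :|: val U == X).
Proof.
move=> cardX; rewrite /Darray setI_eq0; case: ifP => //= dTU.
apply/eqP/eqP => [[/ylex_inj] | <-//]; apply; by rewrite ?card_disjointU.
Qed.

Section Splitting.

Variables (X : {set 'I_L}) (T : {set 'I_L}).
Hypotheses (cardX : #|X| = a + r) (sTX : T \subset X) (cardT : #|T| == r).

Let cardXT : #|X :\: T| == a.
Proof. by rewrite cardsDS // cardX (eqP cardT) addnK. Qed.

Definition split_row : row := exist _ T cardT.
Definition split_col : col := exist _ (X :\: T) cardXT.

Lemma Darray_split : D split_row split_col = Some (ylex (a + r) X).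
Proof.
apply/eqP; rewrite Darray_ylex //= setUDKs // eqxx andbT.
by rewrite -setI_eq0 setIDA setIC -setIDA setDv setI0.
Qed.

End Splitting.

Lemma Darray_lt_bin (T : row) (U : col) s : D T U = Some s -> s < 'C(L, a + r).
Proof. by case/Darray_SomeP=> dTU ->; apply: ylex_lt_bin; apply: card_disjointU. Qed.

Lemma Darray_onto s : s < 'C(L, a + r) -> exists T U, D T U = Some s.
Proof.
case/ylex_onto=> X cardX <-.
have : 0 < #|[set A : {set 'I_L} | A \subset X & #|A| == r]|.
  by rewrite cards_draws cardX bin_gt0 leq_addl.
case/card_gt0P=> T; rewrite inE => /andP[sTX cardT].
by exists (split_row cardT), (split_col cardX sTX cardT); apply: Darray_split.
Qed.

Lemma occ_Darray (X : {set 'I_L}) : #|X| = a + r -> occ D (ylex (a + r) X) = 'C(a + r, r).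
Proof.
move=> cardX; rewrite /occ.
set S := [set _ | _].
have inS (TU : row * col) : (TU \in S) =
    [disjoint val TU.1 & val TU.2] && (val TU.1 :|: val TU.2 == X).
  by rewrite inE Darray_ylex.
rewrite -(@card_in_imset _ _ (fun TU : row * col => val TU.1)); last first.
  move=> [T1 U1] [T2 U2]; rewrite !inS /= => /andP[dTU1 /eqP eqX1] /andP[dTU2 /eqP eqX2].
  move=> /val_inj eqT; subst T2; congr (_, _); apply: val_inj => /=.
  by rewrite -(setDUKl dTU1) -(setDUKl dTU2) eqX1 eqX2.
rewrite -cardX -cards_draws; apply: eq_card => T; rewrite inE.
apply/imsetP/andP => [[[T' U]] | [sTX cardT]].
  by rewrite inS => /andP[_ /eqP <-] -> /=; rewrite subsetUl card_row.
exists (split_row cardT, split_col cardX sTX cardT) => //.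
by rewrite inE Darray_split.
Qed.

Lemma Darray_cross (T T' : row) (U U' : col) :
  val T :|: val U = val T' :|: val U' -> T <> T' -> D T U' = None.
Proof.
move=> eqTU neqT; apply/eqP; rewrite Darray_eq_None; apply/negP => dTU'.
apply: neqT; apply: val_inj; apply/eqP; rewrite eqEcard !card_row leqnn andbT.
apply/subsetP => x xT; have : x \in val T' :|: val U' by rewrite -eqTU inE xT.
by rewrite inE (disjointFr dTU' xT) orbF.
Qed.

Lemma Darray_C2 : MRA_C2 D.
Proof.
move=> T1 T2 U1 U2 s neq /Darray_SomeP[dTU1 ->] /Darray_SomeP[dTU2].
move/ylex_inj; rewrite !card_disjointU // => /(_ erefl erefl) eqX.
have neqT : T1 <> T2.
  move=> eqT; subst T2; apply: neq; congr (_, _); apply: val_inj => /=.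
  by rewrite -(setDUKl dTU1) -(setDUKl dTU2) eqX.
have neqU : U1 <> U2.
  move=> eqU; subst U2; apply: neq; congr (_, _); apply: val_inj => /=.
  by rewrite -(setDUKr dTU1) -(setDUKr dTU2) eqX.
split=> //; first exact: Darray_cross eqX neqT.
by apply: Darray_cross (esym eqX) _ => /esym.
Qed.

Lemma card_Darray_None (U : col) :
  #|[set T : row | D T U == None]| = 'C(L, r) - 'C(L - a, r).
Proof.
have card_Some : #|[set T : row | D T U != None]| = 'C(L - a, r).
  have cardCU : #|~: val U| = L - a by rewrite cardsCs setCK card_ord card_col.
  rewrite -cardCU -cards_draws -(card_imset _ val_inj); apply: eq_card => A.
  rewrite inE; apply/imsetP/andP => [[T] | [sAU cardA]].
    by rewrite inE Darray_eq_None negbK disjoints_subset => ? ->; rewrite card_row.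
  by exists (exist _ A cardA); rewrite // inE Darray_eq_None negbK disjoints_subset.
rewrite -card_Some -card_ksubset -(cardsC [set T | D T U == None]).
have -> : ~: [set T | D T U == None] = [set T | D T U != None].
  by apply/setP => T; rewrite !inE.
by rewrite addnK.
Qed.

End DarrayTheory.

Theorem mainTheorem5 (L a r : nat) :
  0 < L -> 0 < a -> a <= L - 1 -> 0 < r -> r <= L - a ->
  is_regular_MRA 'C(r + a, r) 'C(L, a) 'C(L, r) 'C(L, a + r) (@Darray L r a) /\
  is_MRA 'C(L, a) 'C(L, r) 'C(L, a + r) (@Darray L r a) /\
  (forall U : ksubset L a,
     #|[set T : ksubset L r | Darray T U == None]| = 'C(L, r) - 'C(L - a, r)).
Proof.
move=> _ a_gt0 _ r_gt0 _.
have array : MRA_array 'C(L, a) 'C(L, r) 'C(L, a + r) (@Darray L r a).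
  by split; rewrite ?card_ksubset //; [apply: Darray_lt_bin | apply: Darray_onto].
have occE s : s < 'C(L, a + r) -> occ (@Darray L r a) s = 'C(r + a, r).
  by case/ylex_onto=> X cardX <-; rewrite occ_Darray // addnC.
have bin_gt1_ra : 1 < 'C(r + a, r) by rewrite bin_gt1 // r_gt0 -addn1 leq_add2l.
have C2 := @Darray_C2 L r a.
split; first by split=> // s /occE.
split; last exact: card_Darray_None.
by split=> // s /occE->.
Qed.
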